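(* Let $f\in\bar U_{NP}$ with partition spacing constant $\Xi$, let $\iota\in I$ and $\sigma\in\{-1,1\}$ be such that $v_\iota(\sigma)\notin\{-1,1\}$. Let $\tau_{\iota,\sigma}=\sigma\,\mathrm{sgn}\,v_\iota'(0)$ and $T_{\iota,\sigma}(x)=1-v_\iota(x)/\tau_{\iota,\sigma}$. Then $T_{\iota,\sigma}(x)\ge\Xi^{-1}|\mathcal{O}_\iota|$ for all $x\in[-1,1]$. If moreover $f$ satisfies the analytic distortion condition $(\mathrm{AD}_\delta)$, then there exist $\zeta\in(0,\delta]$ and $\mathfrak{K}_\zeta>0$ such that $|T_{\iota,\sigma}(z)|\ge\mathfrak{K}_\zeta|\mathcal{O}_\iota|$ for all $z\in\check\Lambda_\zeta$.
   Context: Class $\bar U_{NP}$: full-branch Markov maps $f$ of $[-1,1]$: disjoint open intervals $\mathcal{O}_\iota$, $\iota\in I$ ($I$ countable), covering $[-1,1]$ up to a countable set, with $f|_{\mathcal{O}_\iota}$ extending to a $C^2$ bijection $\hat f_\iota:\overline{\mathcal{O}_\iota}\to[-1,1]$ and $v_\iota=\hat f_\iota^{-1}$; required: $\sup_{\iota,x}|v_\iota''/v_\iota'|<\infty$, $\inf_{x\in\cup\mathcal{O}_\iota}\frac{\sqrt{1-x^2}}{\sqrt{1-f(x)^2}}|f'(x)|>0$, and partition spacing constant $\Xi:=\sup\{|\mathcal{O}_\iota|/d(\mathcal{O}_\iota,\sigma):\iota\in I,\sigma\in\{\pm1\},\sigma\notin\overline{\mathcal{O}_\iota}\}<\infty$.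 $\check\Lambda_\zeta$ denotes the closed region bounded by the Bernstein ellipse of parameter $e^\zeta$ (centre $0$, semi-axes $\cosh\zeta$ along $\mathbb{R}$ and $\sinh\zeta$ along $i\mathbb{R}$). $(\mathrm{AD}_\delta)$: each $v_\iota$ is holomorphic on $\check\Lambda_\delta$ and $\sup_{\iota,z\in\check\Lambda_\delta}|v_\iota''(z)/v_\iota'(z)|<\infty$. *)

From Stdlib Require Import Reals Lra.
From Coquelicot Require Import Coquelicot.
Open Scope R_scope.
Set Implicit Arguments.
Unset Strict Implicit.

Definition sgn (x : R) : R :=
  if Rlt_dec 0 x then 1 else if Rlt_dec x 0 then -1 else 0.

Definition cont_within (g : R -> R) (a b x : R) : Prop :=
  filterlim g (within (fun y => a <= y <= b) (locally x)) (locally (g x)).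

Definition C2_closed (g : R -> R) (a b : R) : Prop :=
  exists g1 g2 : R -> R,
    (forall x, a < x < b -> is_derive g x (g1 x) /\ is_derive g1 x (g2 x)) /\
    (forall x, a <= x <= b ->
       cont_within g a b x /\ cont_within g1 a b x /\ cont_within g2 a b x).

Definition bij_onto_I (g : R -> R) (a b : R) : Prop :=
  (forall x, a <= x <= b -> -1 <= g x <= 1) /\
  (forall x y, a <= x <= b -> a <= y <= b -> g x = g y -> x = y) /\
  (forall y, -1 <= y <= 1 -> exists x, a <= x <= b /\ g x = y).

(** The partition element O_i is the open interval
    (a i, b i); fh i is the C^2 extension \hat f_i of f|O_i to its closure,
    and v i = (\hat f_i)^{-1} : [-1,1] -> closure O_i. *)
Definition UNP (I : Type) (a b : I -> R) (f : R -> R) (fh v : I -> R -> R) : Prop :=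
  (exists c : I -> nat, forall i j, c i = c j -> i = j) /\
  (forall i, -1 <= a i /\ a i < b i /\ b i <= 1) /\
  (forall i j x, a i < x < b i -> a j < x < b j -> i = j) /\
  (exists s : nat -> R, forall x, -1 <= x <= 1 ->
      (exists i, a i < x < b i) \/ (exists n, s n = x)) /\
  (forall i x, a i < x < b i -> fh i x = f x) /\
  (forall i, C2_closed (fh i) (a i) (b i)) /\
  (forall i, bij_onto_I (fh i) (a i) (b i)) /\
  (forall i y, -1 <= y <= 1 -> a i <= v i y <= b i /\ fh i (v i y) = y) /\
  (exists M, forall i x, -1 < x < 1 ->
      ex_derive (v i) x /\ ex_derive (Derive (v i)) x /\ Derive (v i) x <> 0 /\
      Rabs (Derive (Derive (v i)) x / Derive (v i) x) <= M) /\
  (exists c, 0 < c /\ forall i x, a i < x < b i ->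
      c <= sqrt (1 - x ^ 2) / sqrt (1 - (f x) ^ 2) * Rabs (Derive f x)).

Definition dist_int (a b s : R) : R := Rmin (Rabs (s - a)) (Rabs (s - b)).

Definition spacing_ratios (I : Type) (a b : I -> R) (r : R) : Prop :=
  exists i s, (s = 1 \/ s = -1) /\ ~ (a i <= s <= b i) /\
              r = (b i - a i) / dist_int (a i) (b i) s.

Definition spacing_const (I : Type) (a b : I -> R) (Xi : R) : Prop :=
  is_lub (spacing_ratios a b) Xi.

(** closed region bounded by the Bernstein ellipse of parameter e^zeta *)
Definition Lambda (zeta : R) (z : C) : Prop :=
  (Re z / cosh zeta) ^ 2 + (Im z / sinh zeta) ^ 2 <= 1.

Definition AD (I : Type) (v : I -> R -> R) (vC : I -> C -> C) (delta : R) : Prop :=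
  (forall i x, -1 <= x <= 1 -> vC i (RtoC x) = RtoC (v i x)) /\
  exists d1 d2 : I -> C -> C,
    (forall i, exists U : C -> Prop, open U /\ (forall z, Lambda delta z -> U z) /\
       forall z, U z ->
         @is_derive C_AbsRing C_NormedModule (vC i) z (d1 i z) /\
         @is_derive C_AbsRing C_NormedModule (d1 i) z (d2 i z)) /\
    (exists M, forall i z, Lambda delta z ->
       d1 i z <> RtoC 0 /\ Cmod (Cdiv (d2 i z) (d1 i z)) <= M).

Definition tau (I : Type) (v : I -> R -> R) (i : I) (s : R) : R :=
  s * sgn (Derive (v i) 0).

Definition T (I : Type) (v : I -> R -> R) (i : I) (s x : R) : R :=
  1 - v i x / tau v i s.

(* Each inverse branch v_i is differentiable with v_i' <> 0 on (-1,1), hence strictly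
   monotone, and it inverts the continuous injection \hat f_i; so v_i maps +-1 onto the
   endpoints of O_i, and v_i(sigma) is the endpoint on the side tau = sigma sgn v_i'(0).
   Since v_i(sigma) <> +-1, the point tau lies outside the closure of O_i, and
   T(x) = 1 - tau v_i(x) >= d(O_i, tau) >= |O_i| / Xi.

   For the complex bound, |v_i''/v_i'| <= M makes |v_i'| grow at most by e^(M |z - w|)
   along segments of the convex region Lambda_delta (a Gronwall argument), while by the
   mean value theorem |v_i'| <= |O_i| / 2 at some real point; hence v_i is Lipschitz on
   Lambda_delta with constant C |O_i|.  A point z of Lambda_zeta lies within e^zeta - 1
   of the real point x = clamp (Re z), so |T(z)| >= Re T(z) >= T(x) - C |O_i| (e^zeta - 1),
   which is at least |O_i| / (2 Xi) once zeta is small. *)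

From Stdlib Require Import Reals Lra Classical.
From Coquelicot Require Import Coquelicot.
Open Scope R_scope.

Definition clamp (A B x : R) : R := Rmax A (Rmin B x).

Ltac case_min_max :=
  unfold clamp, Rmax, Rmin in *;
  repeat match goal with
         | |- context [Rle_dec ?p ?q] => destruct (Rle_dec p q)
         | _ : context [Rle_dec ?p ?q] |- _ => destruct (Rle_dec p q)
         end.

Lemma clamp_in A B x : A <= B -> A <= clamp A B x <= B.
Proof. intros; case_min_max; lra. Qed.

Lemma clamp_id A B x : A <= x <= B -> clamp A B x = x.
Proof. intros; case_min_max; lra. Qed.

Lemma clamp_1_lipschitz A B x y : A <= B ->
  Rabs (clamp A B x - clamp A B y) <= Rabs (x - y).
Proof.
  intros; case_min_max; unfold Rabs;
    repeat match goal with |- context [Rcase_abs ?p] => destruct (Rcase_abs p) end; lra.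
Qed.

Lemma continuity_clamp_comp (h : R -> R) A B : A <= B ->
  (forall x, A <= x <= B -> cont_within h A B x) ->
  continuity (fun x => h (clamp A B x)).
Proof.
  intros HAB Hh x. apply continuity_pt_filterlim.
  apply (filterlim_comp _ _ _ (clamp A B) h _
           (within (fun y => A <= y <= B) (locally (clamp A B x)))).
  - intros P [eps HP]. exists eps. intros y Hy.
    apply HP; [|apply clamp_in; lra].
    change (Rabs (clamp A B y - clamp A B x) < eps).
    eapply Rle_lt_trans; [apply clamp_1_lipschitz; lra | exact Hy].
  - apply Hh, clamp_in; lra.
Qed.

Lemma IVT_within (h : R -> R) A B p q :
  (forall x, A <= x <= B -> cont_within h A B x) ->
  A <= p -> p <= q -> q <= B -> h p * h q <= 0 ->
  exists r, p <= r <= q /\ h r = 0.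
Proof.
  intros Hh Hp Hpq Hq Hs.
  destruct (IVT_cor (fun x => h (clamp A B x)) p q) as [r [Hr Hr0]].
  - apply continuity_clamp_comp; [lra | exact Hh].
  - exact Hpq.
  - rewrite !clamp_id by lra. exact Hs.
  - exists r. rewrite clamp_id in Hr0 by lra. auto.
Qed.

Lemma continuity_pt_cont_within (g : R -> R) A B x :
  continuity_pt g x -> cont_within g A B x.
Proof.
  intros Hg. apply continuity_pt_filterlim in Hg.
  exact (filterlim_filter_le_1 g (filter_le_within _) Hg).
Qed.

Lemma continuity_nonvanishing_same_sign (g : R -> R) a b :
  (forall t, a < t < b -> continuity_pt g t /\ g t <> 0) ->
  forall x y, a < x < b -> a < y < b -> 0 < g x * g y.
Proof.
  intros Hg.
  assert (Hle : forall x y, a < x < b -> a < y < b -> x <= y -> 0 < g x * g y).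
  { intros x y Hx Hy Hxy. apply Rnot_le_lt. intros Hs.
    destruct (IVT_within g x y x y) as [r [Hr Hr0]]; try lra.
    - intros t Ht. apply continuity_pt_cont_within, Hg. lra.
    - apply (Hg r); [lra | exact Hr0]. }
  intros x y Hx Hy. destruct (Rle_dec x y).
  - now apply Hle.
  - rewrite Rmult_comm. apply Hle; lra.
Qed.

Lemma Derive_nonvanishing_strict_mono (v : R -> R) a b :
  (forall x, a < x < b -> ex_derive v x /\ ex_derive (Derive v) x /\ Derive v x <> 0) ->
  forall c x y, a < c < b -> a < x -> x < y -> y < b -> 0 < (v y - v x) * Derive v c.
Proof.
  intros Hv c x y Hc Hx Hxy Hy.
  destruct (MVT_cor2 v (Derive v) x y Hxy) as [m [Hm Hm']].
  { intros t Ht. apply is_derive_Reals, Derive_correct, Hv. lra. }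
  assert (Hsign : 0 < Derive v m * Derive v c).
  { apply (continuity_nonvanishing_same_sign (Derive v) a b); try lra.
    intros t Ht. split; [|apply Hv, Ht].
    apply continuity_pt_filterlim, (ex_derive_continuous (Derive v)), Hv, Ht. }
  rewrite Hm. nra.
Qed.

(* The intermediate value property stands in for the continuity of [h]: unlike
   [cont_within], it is transported by the reflections below for free. *)
Definition inverse_branch (A B : R) (h v : R -> R) : Prop :=
  (forall x, A <= x <= B -> -1 <= h x <= 1) /\
  (forall x y, A <= x <= B -> A <= y <= B -> h x = h y -> x = y) /\
  (forall p q, A <= p -> p <= q -> q <= B -> h p * h q <= 0 ->
     exists r, p <= r <= q /\ h r = 0) /\
  (forall y, -1 <= y <= 1 -> A <= v y <= B /\ h (v y) = y).

Lemma inverse_branch_reflect {A B h v} : inverse_branch A B h v ->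
  inverse_branch (-B) (-A) (fun x => - h (- x)) (fun y => - v (- y)).
Proof.
  intros (Hrng & Hinj & Hivp & Hv). split; [|split; [|split]].
  - intros x Hx. specialize (Hrng (- x) ltac:(lra)). lra.
  - intros x y Hx Hy Hxy. assert (- x = - y) by (apply Hinj; lra). lra.
  - intros p q Hp Hpq Hq Hs.
    destruct (Hivp (- q) (- p)) as [r [Hr Hr0]]; try lra.
    exists (- r). rewrite Ropp_involutive, Hr0. split; lra.
  - intros y Hy. destruct (Hv (- y)) as [Hr Hy']; [lra|].
    rewrite Ropp_involutive, Hy'. split; lra.
Qed.

Lemma inverse_branch_opp {A B h v} : inverse_branch A B h v ->
  inverse_branch A B (fun x => - h x) (fun y => v (- y)).
Proof.
  intros (Hrng & Hinj & Hivp & Hv). split; [|split; [|split]].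
  - intros x Hx. specialize (Hrng x Hx). lra.
  - intros x y Hx Hy Hxy. apply Hinj; lra.
  - intros p q Hp Hpq Hq Hs.
    destruct (Hivp p q) as [r [Hr Hr0]]; try lra.
    exists r. split; [exact Hr | lra].
  - intros y Hy. destruct (Hv (- y)) as [Hr Hy']; [lra|].
    rewrite Hy'. split; lra.
Qed.

Lemma inverse_branch_incr_right_end {A B h v} : inverse_branch A B h v ->
  (forall x y, -1 < x -> x < y -> y < 1 -> v x < v y) -> v 1 = B.
Proof.
  intros [Hrng [Hinj [Hivp Hv]]] Hinc.
  destruct (Hv 0) as [H0 H0']; [lra|].
  assert (HhB : -1 <= h B <= 1) by (apply Hrng; lra).
  assert (HvB : v (h B) = B).
  { destruct (Hv (h B) HhB). apply Hinj; auto; lra. }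
  destruct (Req_dec (h B) 1) as [E|E]; [now rewrite <- E|]. exfalso.
  destruct (Req_dec (h B) (-1)) as [E'|E'].
  - (* [h (v (1/2)) = 1/2 > 0 > h B], so [h] takes the value [h (v 0) = 0] to the right
       of [v (1/2) > v 0], against injectivity. *)
    destruct (Hv (1/2)) as [Hh Hh']; [lra|].
    destruct (Hivp (v (1/2)) B) as [r [Hr Hr0]]; try lra.
    { rewrite Hh', E'. lra. }
    assert (r = v 0) by (apply Hinj; lra).
    specialize (Hinc 0 (1/2)). lra.
  - destruct (Hv ((h B + 1) / 2)) as [Hm _]; [lra|].
    specialize (Hinc (h B) ((h B + 1) / 2)). lra.
Qed.

Lemma sgn_pos d : 0 < d -> sgn d = 1.
Proof. intros. unfold sgn. destruct (Rlt_dec 0 d); lra. Qed.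

Lemma sgn_neg d : d < 0 -> sgn d = -1.
Proof.
  intros. unfold sgn. destruct (Rlt_dec 0 d); [lra|]. destruct (Rlt_dec d 0); lra.
Qed.

Lemma inverse_branch_end {A B h v d s} : inverse_branch A B h v ->
  (forall x y, -1 < x -> x < y -> y < 1 -> 0 < (v y - v x) * d) ->
  (s = 1 \/ s = -1) ->
  (s * sgn d = 1 /\ v s = B) \/ (s * sgn d = -1 /\ v s = A).
Proof.
  intros Hb Hmono Hs.
  assert (Hd := Hmono 0 (1/2)).
  destruct (Rlt_dec 0 d) as [Hpos|Hnpos].
  - rewrite sgn_pos by exact Hpos.
    assert (Hinc : forall x y, -1 < x -> x < y -> y < 1 -> v x < v y).
    { intros x y Hx Hxy Hy. specialize (Hmono x y Hx Hxy Hy). nra. }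
    assert (E1 : v 1 = B) by exact (inverse_branch_incr_right_end Hb Hinc).
    assert (E2 : - v (- 1) = - A).
    { apply (inverse_branch_incr_right_end (inverse_branch_reflect Hb)).
      intros x y Hx Hxy Hy. specialize (Hinc (- y) (- x)). lra. }
    destruct Hs as [-> | ->]; [left | right]; split; lra.
  - assert (Hneg : d < 0) by (assert (d <> 0) by (intros ->; lra); lra).
    rewrite sgn_neg by exact Hneg.
    assert (Hdec : forall x y, -1 < x -> x < y -> y < 1 -> v y < v x).
    { intros x y Hx Hxy Hy. specialize (Hmono x y Hx Hxy Hy). nra. }
    assert (E1 : v (- 1) = B).
    { apply (inverse_branch_incr_right_end (inverse_branch_opp Hb)).
      intros x y Hx Hxy Hy. apply Hdec; lra. }
    assert (E2 : - v (- - 1) = - A).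
    { apply (inverse_branch_incr_right_end (inverse_branch_reflect (inverse_branch_opp Hb))).
      intros x y Hx Hxy Hy. rewrite !Ropp_involutive. specialize (Hdec x y). lra. }
    replace (- - 1) with 1 in E2 by ring.
    destruct Hs as [-> | ->]; [right | left]; split; lra.
Qed.

Lemma dist_int_pos {A B s} : A <= B -> ~ (A <= s <= B) -> 0 < dist_int A B s.
Proof.
  intros HAB Hn. unfold dist_int. apply Rmin_pos; apply Rabs_pos_lt; intro; apply Hn; lra.
Qed.

Lemma spacing_ratio_le {I : Type} {a b : I -> R} {Xi i s} :
  spacing_const a b Xi -> (s = 1 \/ s = -1) -> ~ (a i <= s <= b i) -> a i < b i ->
  (b i - a i) / Xi <= dist_int (a i) (b i) s.
Proof.
  intros [Hub _] Hs Hn Hab.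
  assert (HD := dist_int_pos (Rlt_le _ _ Hab) Hn).
  assert (Hr : (b i - a i) / dist_int (a i) (b i) s <= Xi) by (apply Hub; exists i, s; auto).
  assert (HXi : 0 < Xi).
  { apply Rlt_le_trans with (2 := Hr). apply Rdiv_lt_0_compat; lra. }
  apply (Rle_div_l _ _ _ HD) in Hr. apply (Rle_div_l _ _ _ HXi). lra.
Qed.

Lemma spacing_const_pos {I : Type} {a b : I -> R} {Xi} :
  spacing_const a b Xi -> (forall i, a i < b i) -> 0 < Xi.
Proof.
  intros [Hub Hlub] Hab.
  destruct (classic (exists r, spacing_ratios a b r)) as [[r Hr] | Hnone].
  - apply Rlt_le_trans with (2 := Hub r Hr).
    destruct Hr as [i [s [_ [Hn ->]]]].
    specialize (Hab i).
    apply Rdiv_lt_0_compat; [lra | exact (dist_int_pos (Rlt_le _ _ Hab) Hn)].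
  - assert (Xi <= Xi - 1); [|lra].
    apply Hlub. intros r Hr. exfalso. eauto.
Qed.

Lemma T_lower_bound_on_branch {I : Type} {a b : I -> R} {Xi i tau w y} :
  spacing_const a b Xi -> -1 <= a i -> a i < b i -> b i <= 1 ->
  (tau = 1 /\ w = b i) \/ (tau = -1 /\ w = a i) -> w <> 1 -> w <> -1 ->
  a i <= y <= b i -> (b i - a i) / Xi <= 1 - y / tau.
Proof.
  intros HS Ha Hab Hb Hend Hw1 Hw2 Hy.
  destruct Hend as [[-> ->] | [-> ->]].
  - assert (Hlt : b i < 1) by (destruct (Rle_lt_or_eq_dec _ _ Hb); [assumption | contradiction]).
    assert (Hle : (b i - a i) / Xi <= dist_int (a i) (b i) 1)
      by (apply (spacing_ratio_le HS); [left; reflexivity | lra | exact Hab]).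
    unfold dist_int in Hle.
    rewrite (Rabs_right (1 - a i)), (Rabs_right (1 - b i)), Rmin_right in Hle by lra.
    replace (y / 1) with y by field. lra.
  - assert (Hlt : -1 < a i).
    { destruct (Rle_lt_or_eq_dec _ _ Ha) as [|E]; [assumption | now symmetry in E]. }
    assert (Hle : (b i - a i) / Xi <= dist_int (a i) (b i) (-1))
      by (apply (spacing_ratio_le HS); [right; reflexivity | lra | exact Hab]).
    unfold dist_int in Hle.
    rewrite (Rabs_left (-1 - a i)), (Rabs_left (-1 - b i)), Rmin_left in Hle by lra.
    replace (y / -1) with (- y) by field. lra.
Qed.

Lemma UNP_inverse_branch {I : Type} {a b f fh v} (i : I) :
  UNP a b f fh v -> inverse_branch (a i) (b i) (fh i) (v i).
Proof.
  intros (_ & _ & _ & _ & _ & HC2 & Hbij & Hv & _).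
  destruct (Hbij i) as [Hrng [Hinj _]]. destruct (HC2 i) as (g1 & g2 & _ & Hcont).
  split; [exact Hrng | split; [exact Hinj | split; [| exact (Hv i)]]].
  intros p q. apply IVT_within. intros x Hx. apply Hcont, Hx.
Qed.

Lemma UNP_Derive_nonvanishing {I : Type} {a b f fh} {v : I -> R -> R} (i : I) {x} :
  UNP a b f fh v -> -1 < x < 1 ->
  ex_derive (v i) x /\ ex_derive (Derive (v i)) x /\ Derive (v i) x <> 0.
Proof.
  intros (_ & _ & _ & _ & _ & _ & _ & _ & [M HM] & _) Hx.
  destruct (HM i x Hx) as (H1 & H2 & H3 & _). auto.
Qed.

Lemma UNP_tau_end {I : Type} {a b f fh v} (i : I) {s} :
  UNP a b f fh v -> (s = 1 \/ s = -1) ->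
  (tau v i s = 1 /\ v i s = b i) \/ (tau v i s = -1 /\ v i s = a i).
Proof.
  intros HU Hs. apply (inverse_branch_end (UNP_inverse_branch i HU)); [|exact Hs].
  intros x y Hx Hxy Hy.
  apply (Derive_nonvanishing_strict_mono (v i) (-1) 1); try lra.
  intros t Ht. exact (UNP_Derive_nonvanishing i HU Ht).
Qed.

Lemma UNP_T_lower_bound {I : Type} {a b f fh v Xi} :
  UNP a b f fh v -> spacing_const a b Xi ->
  forall (i : I) s, (s = 1 \/ s = -1) -> v i s <> 1 -> v i s <> -1 ->
  forall x, -1 <= x <= 1 -> (b i - a i) / Xi <= T v i s x.
Proof.
  intros HU HS i s Hs Hv1 Hv2 x Hx.
  assert (Hend := UNP_tau_end i HU Hs).
  destruct (UNP_inverse_branch i HU) as (_ & _ & _ & Hv).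
  destruct HU as (_ & Hab & _). destruct (Hab i) as (Ha & Hab' & Hb).
  apply (T_lower_bound_on_branch HS Ha Hab' Hb Hend Hv1 Hv2), Hv, Hx.
Qed.

Lemma cosh_ge_1 d : 1 <= cosh d.
Proof.
  unfold cosh. pose proof (exp_pos d). rewrite exp_Ropp.
  assert (0 <= (exp d - 1) ^ 2 / exp d) by (apply Rdiv_le_0_compat; [apply pow2_ge_0 | lra]).
  replace ((exp d - 1) ^ 2 / exp d) with (exp d + / exp d - 2) in * by (field; lra). lra.
Qed.

Lemma sinh_pos d : 0 < d -> 0 < sinh d.
Proof. intros H. rewrite <- sinh_0. now apply sinh_lt. Qed.

Lemma sinh_le z d : z <= d -> sinh z <= sinh d.
Proof. intros H. destruct (Req_dec z d) as [->|]; [lra | apply Rlt_le, sinh_lt; lra]. Qed.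

Lemma cosh_le z d : 0 <= z <= d -> cosh z <= cosh d.
Proof.
  intros Hzd. destruct (Req_dec z d) as [->|Hne]; [lra|].
  destruct (MVT_cor2 cosh sinh z d) as [c [Hc Hc']];
    [lra | intros; apply derivable_pt_lim_cosh |].
  assert (0 < sinh c) by (apply sinh_pos; lra). nra.
Qed.

Lemma cosh_plus_sinh d : cosh d + sinh d = exp d.
Proof. unfold cosh, sinh. field. Qed.

Lemma Re_line (p w : C) (t : R) : Re (p + t * w)%C = Re p + t * Re w.
Proof. destruct p, w. simpl. ring. Qed.

Lemma Im_line (p w : C) (t : R) : Im (p + t * w)%C = Im p + t * Im w.
Proof. destruct p, w. simpl. ring. Qed.

Lemma Lambda_bound d z : 0 < d -> Lambda d z ->
  Rabs (Re z) <= cosh d /\ Rabs (Im z) <= sinh d.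
Proof.
  intros Hd Hz. unfold Lambda in Hz.
  pose proof (cosh_ge_1 d). pose proof (sinh_pos d Hd).
  set (u := Re z / cosh d) in *. set (w := Im z / sinh d) in *.
  replace (Re z) with (u * cosh d) by (unfold u; field; lra).
  replace (Im z) with (w * sinh d) by (unfold w; field; lra).
  rewrite !Rabs_mult, (Rabs_right (cosh d)), (Rabs_right (sinh d)) by lra.
  assert (Rabs u <= 1) by (apply Rabs_le; nra).
  assert (Rabs w <= 1) by (apply Rabs_le; nra).
  split; nra.
Qed.

Lemma Lambda_real d (x : R) : 0 < d -> -1 <= x <= 1 -> Lambda d x.
Proof.
  intros Hd Hx. unfold Lambda. simpl.
  pose proof (cosh_ge_1 d). pose proof (sinh_pos d Hd).
  replace (0 / sinh d) with 0 by (field; lra).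
  set (u := x / cosh d).
  assert (x = u * cosh d) by (unfold u; field; lra).
  assert (-1 <= u <= 1) by (split; nra). nra.
Qed.

Lemma Lambda_mono z d w : 0 < z <= d -> Lambda z w -> Lambda d w.
Proof.
  intros Hzd Hw. unfold Lambda in *.
  pose proof (cosh_ge_1 z). pose proof (sinh_pos z ltac:(lra)).
  pose proof (cosh_le z d ltac:(lra)). pose proof (sinh_le z d ltac:(lra)).
  assert (Hle : forall x p q, 0 < p <= q -> (x / q) ^ 2 <= (x / p) ^ 2).
  { intros x p q Hpq. unfold Rdiv. rewrite !Rpow_mult_distr.
    apply Rmult_le_compat_l; [apply pow2_ge_0|].
    assert (/ q <= / p) by (apply Rinv_le_contravar; lra).
    assert (0 < / q) by (apply Rinv_0_lt_compat; lra). nra. }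
  pose proof (Hle (Re w) (cosh z) (cosh d) ltac:(lra)).
  pose proof (Hle (Im w) (sinh z) (sinh d) ltac:(lra)). lra.
Qed.

Lemma Lambda_segment d p q (t : R) : 0 < d -> Lambda d p -> Lambda d q -> 0 <= t <= 1 ->
  Lambda d (p + t * (q - p))%C.
Proof.
  intros Hd Hp Hq Ht. unfold Lambda in *. rewrite Re_line, Im_line.
  pose proof (cosh_ge_1 d). pose proof (sinh_pos d Hd).
  replace (Re (q - p)%C) with (Re q - Re p) by (destruct p, q; simpl; ring).
  replace (Im (q - p)%C) with (Im q - Im p) by (destruct p, q; simpl; ring).
  set (u1 := Re p / cosh d) in *. set (u2 := Re q / cosh d) in *.
  set (w1 := Im p / sinh d) in *. set (w2 := Im q / sinh d) in *.
  replace ((Re p + t * (Re q - Re p)) / cosh d) with (u1 + t * (u2 - u1)) by (unfold u1, u2; field; lra).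
  replace ((Im p + t * (Im q - Im p)) / sinh d) with (w1 + t * (w2 - w1)) by (unfold w1, w2; field; lra).
  (* convexity of the unit disc in the coordinates [(Re/cosh, Im/sinh)] *)
  assert (0 <= t * (1 - t) * ((u1 - u2) ^ 2 + (w1 - w2) ^ 2))
    by (apply Rmult_le_pos; [nra | apply Rplus_le_le_0_compat; apply pow2_ge_0]).
  nra.
Qed.

Lemma Cmod_le_Re_Im z : Cmod z <= Rabs (Re z) + Rabs (Im z).
Proof.
  assert (Hsq : Cmod z ^ 2 <= (Rabs (Re z) + Rabs (Im z)) ^ 2).
  { rewrite Cmod2_alt. pose proof (Rabs_pos (Re z)). pose proof (Rabs_pos (Im z)).
    rewrite <- (pow2_abs (Re z)), <- (pow2_abs (Im z)). nra. }
  pose proof (Cmod_ge_0 z). pose proof (Rabs_pos (Re z)). pose proof (Rabs_pos (Im z)).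
  nra.
Qed.

Lemma clamp_dist X c : 1 <= c -> Rabs X <= c -> Rabs (X - clamp (-1) 1 X) <= c - 1.
Proof.
  intros Hc H. apply Rabs_le_between in H.
  case_min_max; apply Rabs_le; lra.
Qed.

Lemma Lambda_dist_real d w (c : R) : 0 < d -> Lambda d w -> -1 <= c <= 1 ->
  Cmod (w - c)%C <= exp d + 1.
Proof.
  intros Hd Hw Hc. destruct (Lambda_bound d w Hd Hw) as [HRe HIm].
  eapply Rle_trans; [apply Cmod_le_Re_Im|].
  replace (Re (w - c)%C) with (Re w - c) by (destruct w; simpl; ring).
  replace (Im (w - c)%C) with (Im w) by (destruct w; simpl; ring).
  rewrite <- cosh_plus_sinh.
  assert (Rabs (Re w - c) <= Rabs (Re w) + 1).
  { eapply Rle_trans; [apply Rabs_triang|]. rewrite Rabs_Ropp.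
    apply Rabs_le in Hc. lra. }
  lra.
Qed.

Lemma Lambda_dist_clamp d z : 0 < d -> Lambda d z ->
  Cmod (z - clamp (-1) 1 (Re z))%C <= exp d - 1.
Proof.
  intros Hd Hz. destruct (Lambda_bound d z Hd Hz) as [HRe HIm].
  eapply Rle_trans; [apply Cmod_le_Re_Im|].
  replace (Re (z - clamp (-1) 1 (Re z))%C) with (Re z - clamp (-1) 1 (Re z))
    by (destruct z; simpl; ring).
  replace (Im (z - clamp (-1) 1 (Re z))%C) with (Im z) by (destruct z; simpl; ring).
  pose proof (clamp_dist (Re z) (cosh d) (cosh_ge_1 d) HRe). rewrite <- cosh_plus_sinh. lra.
Qed.

Lemma is_derive_C_line {f : C -> C} {l p w : C} {t0 : R} :
  is_derive f (p + t0 * w)%C l ->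
  forall eps : posreal, exists delta : posreal, forall h : R, Rabs h < delta ->
    Cmod (f (p + RtoC (t0 + h) * w) - f (p + t0 * w) - h * (l * w))%C <= eps * Rabs h.
Proof.
  intros [_ Hd] eps.
  set (z0 := (p + t0 * w)%C). set (k := Cmod w + 1).
  assert (Hk : 0 < k) by (unfold k; pose proof (Cmod_ge_0 w); lra).
  destruct (Hd z0 (fun P HP => HP) (mkposreal _ (Rdiv_lt_0_compat _ _ (cond_pos eps) Hk)))
    as [d Hball].
  exists (mkposreal _ (Rdiv_lt_0_compat _ _ (cond_pos d) Hk)). simpl. intros h Hh.
  set (y := (p + RtoC (t0 + h) * w)%C).
  assert (Hstep : (y - z0)%C = (h * w)%C) by (unfold y, z0; rewrite RtoC_plus; ring).
  assert (Hnorm : Cmod (y - z0)%C = Rabs h * Cmod w) by (rewrite Hstep, Cmod_mult, Cmod_R; ring).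
  assert (Hwk : Cmod w <= k) by (unfold k; lra).
  specialize (Hball y).
  change (Cmod (y - z0)%C < d ->
          Cmod (f y - f z0 - (y - z0) * l)%C <= eps / k * Cmod (y - z0)%C) in Hball.
  rewrite Hnorm, Hstep in Hball.
  replace (h * (l * w))%C with (h * w * l)%C by ring.
  eapply Rle_trans; [apply Hball|].
  - apply (Rle_lt_trans _ (Rabs h * k)); [apply Rmult_le_compat_l; [apply Rabs_pos | exact Hwk]|].
    apply (Rmult_lt_compat_r k) in Hh; [|exact Hk].
    unfold Rdiv in Hh. rewrite Rmult_assoc, Rinv_l, Rmult_1_r in Hh by lra. exact Hh.
  - replace (eps / k * (Rabs h * Cmod w)) with (eps * Rabs h * (Cmod w / k)) by (field; lra).
    rewrite <- (Rmult_1_r (eps * Rabs h)) at 2.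
    apply Rmult_le_compat_l.
    + apply Rmult_le_pos; [apply Rlt_le, cond_pos | apply Rabs_pos].
    + apply (Rle_div_l _ _ _ Hk). lra.
Qed.

Lemma derivable_pt_lim_proj_line (pi : C -> R) (f : C -> C) (l p w : C) (t0 : R) :
  (forall u v : C, pi (u - v)%C = pi u - pi v) ->
  (forall (r : R) (u : C), pi (r * u)%C = r * pi u) ->
  (forall u, Rabs (pi u) <= Cmod u) ->
  is_derive f (p + t0 * w)%C l ->
  derivable_pt_lim (fun t => pi (f (p + t * w)%C)) t0 (pi (l * w)%C).
Proof.
  intros Hsub Hscal Hbound Hf eps Heps.
  destruct (is_derive_C_line Hf (mkposreal (eps / 2) ltac:(lra))) as [delta Hdelta].
  exists delta. intros h Hh0 Hh. simpl in Hdelta.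
  specialize (Hdelta h Hh).
  pose proof (Hbound (f (p + RtoC (t0 + h) * w) - f (p + t0 * w) - h * (l * w))%C) as Hpi.
  rewrite !Hsub, Hscal in Hpi.
  assert (Hhpos : 0 < Rabs h) by (apply Rabs_pos_lt, Hh0).
  match goal with |- Rabs ((?A - ?B) / h - _) < _ =>
    replace ((A - B) / h - pi (l * w)%C) with ((A - B - h * pi (l * w)%C) / h) by (field; exact Hh0) end.
  unfold Rdiv. rewrite Rabs_mult, Rabs_inv.
  apply (Rmult_lt_reg_r (Rabs h)); [exact Hhpos|].
  rewrite Rmult_assoc, Rinv_l, Rmult_1_r by lra. nra.
Qed.

Lemma Im_le_Cmod z : Rabs (Im z) <= Cmod z.
Proof. exact (Rle_trans _ _ _ (Rmax_r _ _) (Rmax_Cmod z)). Qed.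

Lemma derivable_pt_lim_Re_line {f : C -> C} {l p w : C} {t0 : R} :
  is_derive f (p + t0 * w)%C l ->
  derivable_pt_lim (fun t => Re (f (p + t * w)%C)) t0 (Re (l * w)%C).
Proof.
  apply derivable_pt_lim_proj_line; [intros [] []; simpl; ring | intros r []; simpl; ring |].
  exact re_le_Cmod.
Qed.

Lemma derivable_pt_lim_Im_line {f : C -> C} {l p w : C} {t0 : R} :
  is_derive f (p + t0 * w)%C l ->
  derivable_pt_lim (fun t => Im (f (p + t * w)%C)) t0 (Im (l * w)%C).
Proof.
  apply derivable_pt_lim_proj_line; [intros [] []; simpl; ring | intros r []; simpl; ring |].
  exact Im_le_Cmod.
Qed.

Lemma Cmod_Gronwall (u du : R -> C) (K : R) :
  (forall t, 0 <= t <= 1 ->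
     derivable_pt_lim (fun s => Re (u s)) t (Re (du t)) /\
     derivable_pt_lim (fun s => Im (u s)) t (Im (du t))) ->
  (forall t, 0 <= t <= 1 -> Cmod (du t) <= K * Cmod (u t)) ->
  Cmod (u 1) <= exp K * Cmod (u 0).
Proof.
  intros Hd Hb.
  set (a := fun s => Re (u s)). set (b := fun s => Im (u s)).
  (* [|u t|^2 e^(-2Kt)] is nonincreasing *)
  set (Phi := fun t => (a t * a t + b t * b t) * exp (-(2 * K) * t)).
  set (dPhi := fun t =>
    (Re (du t) * a t + a t * Re (du t) + (Im (du t) * b t + b t * Im (du t)))
      * exp (-(2 * K) * t)
    + (a t * a t + b t * b t) * (exp (-(2 * K) * t) * (-(2 * K) * 1))).
  assert (HPhi : forall t, 0 <= t <= 1 -> derivable_pt_lim Phi t (dPhi t)).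
  { intros t Ht. destruct (Hd t Ht) as [Ha Hb'].
    apply (derivable_pt_lim_mult (fun t => a t * a t + b t * b t) (fun t => exp (-(2 * K) * t))).
    - apply (derivable_pt_lim_plus (fun t => a t * a t) (fun t => b t * b t)).
      + exact (derivable_pt_lim_mult a a t _ _ Ha Ha).
      + exact (derivable_pt_lim_mult b b t _ _ Hb' Hb').
    - apply (derivable_pt_lim_comp (fun t => -(2 * K) * t) exp).
      + apply (derivable_pt_lim_scal id), derivable_pt_lim_id.
      + apply derivable_pt_lim_exp. }
  assert (HdPhi : forall t, 0 <= t <= 1 -> dPhi t <= 0).
  { intros t Ht. unfold dPhi.
    assert (Hcs : a t * Re (du t) + b t * Im (du t) <= Cmod (u t) * Cmod (du t)).
    { unfold Cmod. rewrite <- !Rsqr_pow2. apply sqrt_cauchy. }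
    assert (Hu2 : Cmod (u t) ^ 2 = a t * a t + b t * b t) by (rewrite Cmod2_alt; unfold a, b; ring).
    assert (Hinner : a t * Re (du t) + b t * Im (du t) <= K * (a t * a t + b t * b t)).
    { rewrite <- Hu2. eapply Rle_trans; [exact Hcs|].
      pose proof (Cmod_ge_0 (u t)). pose proof (Hb t Ht). nra. }
    pose proof (exp_pos (-(2 * K) * t)). nra. }
  destruct (MVT_cor2 Phi dPhi 0 1 ltac:(lra) HPhi) as [c [Hc Hc']].
  assert (Hmono : Phi 1 <= Phi 0) by (pose proof (HdPhi c ltac:(lra)); nra).
  unfold Phi in Hmono.
  replace (-(2 * K) * 1) with (- (K + K)) in Hmono by ring.
  rewrite Rmult_0_r, exp_0, Rmult_1_r in Hmono.
  rewrite exp_Ropp, exp_plus in Hmono.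
  assert (HE : 0 < exp K) by apply exp_pos.
  apply (Rmult_le_compat_r (exp K * exp K)) in Hmono; [|nra].
  rewrite Rmult_assoc, Rinv_l, Rmult_1_r in Hmono by nra.
  apply Rsqr_incr_0_var; [|pose proof (Cmod_ge_0 (u 0)); nra].
  rewrite !Rsqr_pow2, Rpow_mult_distr, !Cmod2_alt. fold (a 1) (b 1) (a 0) (b 0). nra.
Qed.

Lemma exp_le x y : x <= y -> exp x <= exp y.
Proof. intros H. destruct (Req_dec x y) as [->|]; [lra | apply Rlt_le, exp_increasing; lra]. Qed.

Section AnalyticBranch.

Variables (v : R -> R) (vC d1 d2 : C -> C) (delta M A B : R).
Hypothesis delta_pos : 0 < delta.
Hypothesis vC_real : forall x, -1 <= x <= 1 -> vC (RtoC x) = RtoC (v x).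
Hypothesis v_range : forall y, -1 <= y <= 1 -> A <= v y <= B.
Hypothesis vC_derive : forall z, Lambda delta z -> is_derive vC z (d1 z) /\ is_derive d1 z (d2 z).
Hypothesis distortion : forall z, Lambda delta z -> d1 z <> RtoC 0 /\ Cmod (d2 z / d1 z)%C <= M.

Lemma d2_le_d1 z : Lambda delta z -> Cmod (d2 z) <= Rabs M * Cmod (d1 z).
Proof.
  intros Hz. destruct (distortion z Hz) as [Hne HM].
  rewrite Cmod_div in HM by exact Hne.
  apply Cmod_gt_0 in Hne.
  apply (Rle_div_l _ _ _ Hne) in HM.
  pose proof (Rle_abs M). pose proof (Cmod_ge_0 (d1 z)). nra.
Qed.

Lemma d1_small_on_real_axis : exists c, -1 < c < 1 /\ Cmod (d1 c) <= (B - A) / 2.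
Proof.
  assert (Hline : forall t : R, (0 + t * 1)%C = RtoC t) by (intros; ring).
  assert (Hder : forall t, -1 <= t <= 1 -> is_derive vC (0 + t * 1)%C (d1 t)).
  { intros t Ht. rewrite Hline. apply vC_derive, Lambda_real; assumption. }
  destruct (MVT_cor2 (fun t => Re (vC (0 + t * 1)%C)) (fun t => Re (d1 t * 1)%C) (-1) 1)
    as [c [Hc Hc']]; [lra | intros t Ht; exact (derivable_pt_lim_Re_line (Hder t Ht)) |].
  rewrite !Hline, !vC_real in Hc by lra.
  replace (Re (d1 c * 1)%C) with (Re (d1 c)) in Hc by (f_equal; ring).
  change (v 1 - v (-1) = Re (d1 c) * (1 - -1)) in Hc.
  (* [Im vC] vanishes on the real segment, hence so does its derivative [Im d1]. *)
  assert (HIm : Im (d1 c) = 0).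
  { pose proof (derivable_pt_lim_Im_line (Hder c ltac:(lra))) as HIm.
    apply is_derive_Reals, (is_derive_ext_loc _ (fun _ => 0)), is_derive_unique in HIm.
    - rewrite Derive_const in HIm. replace (d1 c * 1)%C with (d1 c) in HIm by ring.
      symmetry. exact HIm.
    - apply (locally_interval _ c (-1) 1); simpl; try lra.
      intros t Ht1 Ht2. rewrite Hline, vC_real by lra. reflexivity. }
  exists c. split; [exact Hc'|].
  replace (d1 c) with (RtoC (Re (d1 c))) by (apply injective_projections; [reflexivity | symmetry; exact HIm]).
  rewrite Cmod_R.
  destruct (v_range 1) as [HA1 HB1]; [lra|]. destruct (v_range (-1)) as [HA2 HB2]; [lra|].
  apply Rabs_le. lra.
Qed.

Lemma d1_bound w : Lambda delta w ->
  Cmod (d1 w) <= exp (Rabs M * (exp delta + 1)) * ((B - A) / 2).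
Proof.
  intros Hw. destruct d1_small_on_real_axis as [c [Hc Hc']].
  set (W := (w - c)%C).
  assert (Hseg : forall t : R, 0 <= t <= 1 -> Lambda delta (c + t * W)%C).
  { intros t Ht. apply Lambda_segment; auto. apply Lambda_real; lra. }
  pose proof (Cmod_Gronwall (fun t => d1 (c + t * W)%C) (fun t => (d2 (c + t * W) * W)%C)
                (Rabs M * Cmod W)) as HG.
  cbv beta in HG.
  replace (c + 1 * W)%C with w in HG by (unfold W; ring).
  replace (c + 0 * W)%C with (RtoC c) in HG by ring.
  eapply Rle_trans; [apply HG|].
  - intros t Ht. destruct (vC_derive _ (Hseg t Ht)) as [_ Hd2].
    split; [exact (derivable_pt_lim_Re_line Hd2) | exact (derivable_pt_lim_Im_line Hd2)].
  - intros t Ht. rewrite Cmod_mult.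
    pose proof (d2_le_d1 _ (Hseg t Ht)). pose proof (Cmod_ge_0 W). nra.
  - apply Rmult_le_compat; [apply Rlt_le, exp_pos | apply Cmod_ge_0 | | exact Hc'].
    apply exp_le, Rmult_le_compat_l; [apply Rabs_pos|].
    apply Lambda_dist_real; [exact delta_pos | exact Hw | lra].
Qed.

Lemma Re_vC_near_real_axis zeta z : 0 < zeta <= delta -> Lambda zeta z ->
  Rabs (Re (vC z) - v (clamp (-1) 1 (Re z)))
    <= exp (Rabs M * (exp delta + 1)) * ((B - A) / 2) * (exp zeta - 1).
Proof.
  intros Hzeta Hz.
  set (x := clamp (-1) 1 (Re z)).
  assert (Hx : -1 <= x <= 1) by (apply clamp_in; lra).
  set (W := (z - x)%C).
  assert (Hseg : forall t : R, 0 <= t <= 1 -> Lambda delta (x + t * W)%C).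
  { intros t Ht. apply (Lambda_mono zeta); [exact Hzeta|].
    apply Lambda_segment; [lra | apply Lambda_real; lra | exact Hz | exact Ht]. }
  destruct (MVT_cor2 (fun t => Re (vC (x + t * W)%C)) (fun t => Re (d1 (x + t * W) * W)%C) 0 1)
    as [c [Hc Hc']].
  { lra. }
  { intros t Ht. apply derivable_pt_lim_Re_line, vC_derive, Hseg, Ht. }
  replace (x + 1 * W)%C with z in Hc by (unfold W; ring).
  replace (x + 0 * W)%C with (RtoC x) in Hc by ring.
  rewrite vC_real in Hc by exact Hx. change (Re (RtoC (v x))) with (v x) in Hc.
  rewrite Hc, Rminus_0_r, Rmult_1_r.
  eapply Rle_trans; [apply re_le_Cmod|]. rewrite Cmod_mult.
  apply Rmult_le_compat; [apply Cmod_ge_0 | apply Cmod_ge_0 | apply d1_bound, Hseg; lra |].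
  apply Lambda_dist_clamp; [lra | exact Hz].
Qed.

End AnalyticBranch.

Lemma exp_sub_1_small delta eps : 0 < delta -> 0 < eps ->
  exists zeta, 0 < zeta <= delta /\ exp zeta - 1 <= eps.
Proof.
  intros Hd He.
  assert (Hl : 0 < ln (1 + eps)) by (rewrite <- ln_1; apply ln_increasing; lra).
  exists (Rmin delta (ln (1 + eps))).
  split; [split; [apply Rmin_pos; lra | apply Rmin_l]|].
  assert (Hle : exp (Rmin delta (ln (1 + eps))) <= exp (ln (1 + eps))) by apply exp_le, Rmin_r.
  rewrite exp_ln in Hle by lra. lra.
Qed.

Lemma Re_one_sub_div (u : C) (tau : R) : tau <> 0 -> Re (1 - u / tau)%C = 1 - Re u / tau.
Proof.
  intros Htau. destruct u as [u1 u2].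
  unfold Cminus, Cdiv, Cmult, Cinv, Cplus, Copp, RtoC, Re. simpl. field. exact Htau.
Qed.

Lemma Cmod_one_sub_div_ge (u : C) (r : R) {tau : R} : tau = 1 \/ tau = -1 ->
  1 - r / tau - Rabs (Re u - r) <= Cmod (1 - u / tau)%C.
Proof.
  intros Htau.
  eapply Rle_trans; [|apply re_le_Cmod]. eapply Rle_trans; [|apply Rle_abs].
  rewrite Re_one_sub_div by (destruct Htau as [-> | ->]; lra).
  pose proof (Rle_abs (Re u - r)). pose proof (Rle_abs (- (Re u - r))). rewrite Rabs_Ropp in *.
  destruct Htau as [-> | ->]; unfold Rdiv;
    [rewrite Rinv_1 | replace (/ -1) with (-1) by field]; lra.
Qed.

Theorem lemma8 (I : Type) (a b : I -> R) (f : R -> R) (fh v : I -> R -> R) (Xi : R) :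
  UNP a b f fh v ->
  spacing_const a b Xi ->
  (forall (i : I) (s : R), (s = 1 \/ s = -1) -> v i s <> 1 -> v i s <> -1 ->
     forall x, -1 <= x <= 1 -> (b i - a i) / Xi <= T v i s x) /\
  (forall (delta : R) (vC : I -> C -> C), 0 < delta -> AD v vC delta ->
     exists zeta, 0 < zeta <= delta /\ exists K, 0 < K /\
       forall (i : I) (s : R), (s = 1 \/ s = -1) -> v i s <> 1 -> v i s <> -1 ->
       forall z, Lambda zeta z ->
         K * (b i - a i) <= Cmod (Cminus (RtoC 1) (Cdiv (vC i z) (RtoC (tau v i s))))).
Proof.
  intros HU HS. split; [exact (UNP_T_lower_bound HU HS)|].
  intros delta vC Hdelta [HvC [d1 [d2 [Hder [M HM]]]]].
  pose proof HU as (_ & Hab & _).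
  assert (HXi : 0 < Xi) by (apply (spacing_const_pos HS); intro i; apply Hab).
  set (E := exp (Rabs M * (exp delta + 1))).
  assert (HE : 0 < E) by apply exp_pos.
  destruct (exp_sub_1_small delta (/ (Xi * E)) Hdelta) as [zeta [Hzeta Hsmall]].
  { apply Rinv_0_lt_compat, Rmult_lt_0_compat; assumption. }
  exists zeta. split; [exact Hzeta|].
  exists (/ (2 * Xi)). split; [apply Rinv_0_lt_compat; lra|].
  intros i s Hs Hv1 Hv2 z Hz.
  destruct (Hder i) as [U [_ [HLU HUd]]].
  destruct (UNP_inverse_branch i HU) as (_ & _ & _ & Hv).
  set (x := clamp (-1) 1 (Re z)).
  assert (Hreal := UNP_T_lower_bound HU HS i s Hs Hv1 Hv2 x (clamp_in (-1) 1 (Re z) ltac:(lra))).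
  assert (Hnear := Re_vC_near_real_axis (v i) (vC i) (d1 i) (d2 i) delta M (a i) (b i) Hdelta
                     (HvC i) (fun y Hy => proj1 (Hv y Hy)) (fun w Hw => HUd w (HLU w Hw))
                     (HM i) zeta z Hzeta Hz).
  assert (Htau : tau v i s = 1 \/ tau v i s = -1)
    by (destruct (UNP_tau_end i HU Hs) as [[? _] | [? _]]; auto).
  eapply Rle_trans; [|exact (Cmod_one_sub_div_ge (vC i z) (v i x) Htau)].
  assert (Hgap : E * ((b i - a i) / 2) * (exp zeta - 1) <= / (2 * Xi) * (b i - a i)).
  { specialize (Hab i).
    eapply Rle_trans; [apply Rmult_le_compat_l; [nra | exact Hsmall]|].
    right. field. lra. }
  unfold T in Hreal. fold E x in Hnear.
  replace ((b i - a i) / Xi) with (2 * (/ (2 * Xi) * (b i - a i))) in Hreal by (field; lra).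
  lra.
Qed.
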